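(* Let $m\ge1$, let $S\le G_{m,m}$ be the stabilizer of $(0,0,\dots,0)\in H_{2m+1}$ under the right action $\pi$ described below, and let $\widehat K_m\to K_{m,m}$ be the finite covering space of the presentation complex $K_{m,m}$ corresponding to $S$. Then $\widehat K_m$ cellularly embeds into the $2$–skeleton of $\mathcal T_{2m+1}$.
   Context: $G_{m,m}=\langle a_1,\dots,a_{2m+1}\mid [a_i,a_{i+1}]=1\ (1\le i\le m),\ a_{m+j+1}^{-1}a_ja_{m+j+1}=a_{m+j}\ (1\le j\le m)\rangle$; $K_{m,m}$ is its presentation $2$–complex (one $0$–cell, $2m+1$ loops, $2m$ squares); $G_{m,k}$ denotes the subgroup generated by $a_1,\dots,a_{m+k+1}$. Let $H_n=\{0,1\}^n$, identified with a subset of $H_{n+1}$ by appending $0$; $H_n^*\subset H_{n+1}$ the tuples with last coordinate $1$. Let $\beta_i$ flip the $i$-th coordinate and $\varphi_{k,m+k}$ swap the $k$-th and $(m+k)$-th coordinates. The right action $\pi$ ($\pi(gh)=\pi(h)\pi(g)$) of $G_{m,m}$ on $H_{2m+1}$ is defined inductively: $\pi(a_i)=\beta_i$ on $H_{m+1}$ for $i\le m+1$; for $k=1,\dots,m$, $\pi(a_{m+k+1})=\beta_{m+k+1}$ on $H_{m+k+1}$ and, for $j\le m+k$, $\pi(a_j)|_{H^*_{m+k}}=\beta_{m+k+1}\circ\varphi_{k,m+k}\circ\pi(a_j)|_{H_{m+k}}\circ\varphi_{k,m+k}\circ\beta_{m+k+1}$; this is a well-defined transitive right action. $C_2=\mathbb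 R/2\mathbb Z$ has $0$–cells $0,1$ and $1$–cells $[0,1]$, $[1,2]$; $\mathcal T_n=(\mathbb R/2\mathbb Z)^n$ has the product CW (cube) structure, with $0$–skeleton $H_n$. *)

From mathcomp Require Import all_boot.
Set Implicit Arguments. Unset Strict Implicit. Unset Printing Implicit Defensive.

(* ---------- The right action pi of G_{m,m} on H_{2m+1}, on generators ----------
   Points are represented (auxiliarily) as x : nat -> bool, coordinate k (1-based)
   being x k; only coordinates 1..n matter at stage n. *)

Definition flipc (n : nat) (x : nat -> bool) : nat -> bool :=
  fun k => if k == n then ~~ x k else x k.

Definition swapc (a b : nat) (x : nat -> bool) : nat -> bool :=
  fun k => if k == a then x b else if k == b then x a else x k.

(* piH m i n x = pi(a_i)(x) for x in H_n (1-based generator index i), following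
   the inductive definition: on H_{m+1}, pi(a_i) = beta_i; at stage n = m+k+1,
   pi(a_n) = beta_n, and for i <= m+k, pi(a_i) is pi(a_i)|_{H_{m+k}} on points with
   last coordinate 0 and beta_n o phi_{k,m+k} o pi(a_i)|_{H_{m+k}} o phi_{k,m+k} o beta_n
   on points with last coordinate 1. *)
Fixpoint piH (m i n : nat) (x : nat -> bool) : nat -> bool :=
  match n with
  | 0 => flipc i x
  | n'.+1 =>
      if n <= m.+1 then flipc i x
      else if i == n then flipc n x
      else let k := n - m.+1 in
           if x n then flipc n (swapc k n' (piH m i n' (swapc k n' (flipc n x))))
           else piH m i n' x
  end.

(* H_{2m+1} = {0,1}^{2m+1}, coordinate k+1 of the paper = index k : 'I_(2m+1). *)
Definition Hpt (m : nat) := {ffun 'I_(2 * m).+1 -> bool}.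

Definition ext_pt m (x : Hpt m) : nat -> bool :=
  fun k => if k is k'.+1 then
             (if (insub k' : option 'I_(2 * m).+1) is Some o then x o else false)
           else false.

(* x . a_{i+1}  (right action by the generator with 0-based index i) *)
Definition act m (i : 'I_(2 * m).+1) (x : Hpt m) : Hpt m :=
  [ffun o : 'I_(2 * m).+1 => piH m i.+1 (2 * m).+1 (ext_pt x) o.+1].

Definition gen m (k : nat) : 'I_(2 * m).+1 := inord k.-1.

(* ---------- The covering complex \hat K_m (Schreier coset complex) ----------
   0-cells : points v of H_{2m+1}  (= cosets S\G via Sg |-> 0.g, the action being
             transitive);
   1-cells : pairs (v, i), the lift at v of the loop a_{i+1}, from v to v.a_{i+1};
   2-cells : pairs (v, r), the lift at v of the relator r.  Relators are indexed by
             r : bool * 'I_m with j := r.2 + 1: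
               (false, _) : [a_j, a_{j+1}],
               (true , _) : a_{m+j+1}^{-1} a_j a_{m+j+1} a_{m+j}^{-1}.
             Each relator has the form  a b (c d)^{-1}  (a b = c d in G); its lift
             at v is the square with boundary edges
             (v,a) (v.a,b) (v,c) (v.c,d). *)
Definition Kvert m := Hpt m.
Definition Kedge m := (Hpt m * 'I_(2 * m).+1)%type.
Definition Kface m := (Hpt m * (bool * 'I_m))%type.

Definition edge_src m (e : Kedge m) : Hpt m := e.1.
Definition edge_tgt m (e : Kedge m) : Hpt m := act e.2 e.1.

Definition rel_letters m (r : bool * 'I_m) :
  'I_(2 * m).+1 * 'I_(2 * m).+1 * 'I_(2 * m).+1 * 'I_(2 * m).+1 :=
  let j := (r.2).+1 in
  if r.1 then (gen m j, gen m (m + j + 1), gen m (m + j + 1), gen m (m + j))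
  else (gen m j, gen m j.+1, gen m j.+1, gen m j).

Definition face_boundary m (f : Kface m) : {set Kedge m} :=
  let: (v, r) := f in
  let: (a, b, c, d) := rel_letters r in
  [set (v, a); (act a v, b); (v, c); (act c v, d)].

(* ---------- The cube complex T_n = (R/2Z)^n (product CW structure) ----------
   Cells of C_2 = R/2Z: (false, b) = the 0-cell b (b = 0 or 1);
   (true, false) = the 1-cell [0,1], (true, true) = the 1-cell [1,2]. *)
Definition Tcell (n : nat) := {ffun 'I_n -> bool * bool}.

Definition cdim n (c : Tcell n) : nat := #|[set k | (c k).1]|.

(* d lies in the closure of c: coordinatewise equal, or c_k is a 1-cell and d_k a
   0-cell (both 0 and 1 are endpoints of each of [0,1], [1,2] in R/2Z). *)
Definition cface n (d c : Tcell n) : bool :=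
  [forall k, (d k == c k) || ((c k).1 && ~~ (d k).1)].

Definition cellular_embedding m
  (fV : Kvert m -> Tcell (2 * m).+1) (fE : Kedge m -> Tcell (2 * m).+1)
  (fF : Kface m -> Tcell (2 * m).+1) : Prop :=
  [/\ [/\ injective fV, injective fE & injective fF],
      [/\ (forall v, cdim (fV v) = 0), (forall e, cdim (fE e) = 1)
        & (forall f, cdim (fF f) = 2)],
      (forall e : Kedge m,
         ([set d | cface d (fE e) && (cdim d == 0)] = [set fV (edge_src e); fV (edge_tgt e)])) &
      (forall f : Kface m,
         [set d | cface d (fF f) && (cdim d == 1)] = fE @: face_boundary f)].

From mathcomp Require Import all_boot zify.

Set Implicit Arguments.
Unset Strict Implicit.
Unset Printing Implicit Defensive.

(** Every generator a_i acts on H_{2m+1} by flipping a single coordinate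
    κ_i(x), and for fixed x the map i ↦ κ_i(x) is injective.  Hence the
    vertex x and the edge (x, a_i) of the covering can be sent to the 0-cell x
    and to the 1-cell of T_{2m+1} leaving x in direction κ_i(x).  Each relator
    a b = c d lifts at x to a closed path that flips κ_a(x), κ_b(x.a) = κ_c(x)
    and κ_c(x), κ_d(x.c) = κ_a(x), with κ_a(x) ≠ κ_c(x): it is the boundary of
    the 2-cell at x spanned by these two directions.  This is proved by
    induction along the inductive definition of π, the only non-trivial case
    being the stage at which a_{m+j+1} enters the conjugation relator. *)

Definition swapn (a b t : nat) : nat :=
  if t == a then b else if t == b then a else t.

Lemma swapn_inj a b : injective (swapn a b).
Proof. by move=> u v; rewrite /swapn; repeat case: eqP => //=; lia. Qed.

Lemma swapn_range a b n t :
  0 < a <= n -> 0 < b <= n -> 0 < t <= n -> 0 < swapn a b t <= n.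
Proof. by rewrite /swapn; case: eqP => _; [|case: eqP]; lia. Qed.

Fixpoint flip_coord (m i n : nat) (x : nat -> bool) : nat :=
  match n with
  | 0 => i
  | n'.+1 =>
      if n <= m.+1 then i
      else if i == n then n
      else let k := n - m.+1 in
           if x n then swapn k n' (flip_coord m i n' (swapc k n' (flipc n x)))
           else flip_coord m i n' x
  end.

Section FlipCoord.

Variable m : nat.

Lemma flip_coord_base n i x : n <= m.+1 -> flip_coord m i n x = i.
Proof. by case: n => [|n] //= ->. Qed.

Lemma flip_coord_top n x : 0 < n -> flip_coord m n n x = n.
Proof. by case: n => [|n] //= _; case: ifP => //; rewrite eqxx. Qed.

Lemma flip_coord_step n i x : m < n -> i != n.+1 ->
  flip_coord m i n.+1 x =
    if x n.+1 then swapn (n - m) n (flip_coord m i n (swapc (n - m) n (flipc n.+1 x)))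
    else flip_coord m i n x.
Proof. by move=> hn hi /=; rewrite ifF ?(negbTE hi) ?subSS //; lia. Qed.

Lemma flip_coord_range n i x : 0 < i <= n -> 0 < flip_coord m i n x <= n.
Proof.
elim: n i x => [|n IH] i x hi; first by lia.
case: (leqP n.+1 m.+1) => hn; first by rewrite flip_coord_base.
case: (eqVneq i n.+1) => [->|hin]; first by rewrite flip_coord_top //; lia.
have hi' : 0 < i <= n by lia.
rewrite flip_coord_step //; case: (x n.+1); last by have := IH i x hi'; lia.
move: (flip_coord m i n _) (IH i (swapc (n - m) n (flipc n.+1 x)) hi') => K hK.
have : 0 < swapn (n - m) n K <= n by apply: swapn_range; lia.
lia.
Qed.

Lemma flip_coord_below n i x : 0 < i <= n -> 0 < flip_coord m i n.+1 x <= n.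
Proof.
move=> hi; case: (leqP n.+1 m.+1) => hn; first by rewrite flip_coord_base.
rewrite flip_coord_step //; last by lia.
case: (x n.+1); last exact: flip_coord_range.
apply: swapn_range; try lia; exact: flip_coord_range.
Qed.

Lemma eq_flip_coord n i x y : (forall t, 0 < t <= n -> x t = y t) ->
  flip_coord m i n x = flip_coord m i n y.
Proof.
elim: n i x y => [|n IH] i x y //= hxy.
case: ifP => // hn; case: eqP => // hin.
rewrite -hxy; last by lia.
case: (x n.+1); last by apply: IH => t ht; apply: hxy; lia.
congr swapn; apply: IH => t ht; rewrite /swapc /flipc.
by repeat case: eqP => //=; move=> *; rewrite hxy //; lia.
Qed.

Lemma piH_flip_coord n i x : 0 < m -> 0 < i <= n ->
  piH m i n x =1 flipc (flip_coord m i n x) x.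
Proof.
elim: n i x => [|n IH] i x //= hm hi t.
case: ifP => // hn; case: eqP => // hin.
have hi' : 0 < i <= n by lia.
case hx: (x n.+1); last by rewrite IH.
set k := n.+1 - m.+1; have hk : 0 < k < n by rewrite /k; lia.
have := @flip_coord_range n i (swapc k n (flipc n.+1 x)) hi'.
rewrite /flipc /swapc !IH //; move: (flip_coord _ _ _ _) => K hK.
rewrite /flipc /swapc /swapn.
by repeat case: eqP => //=; try lia; move=> *; subst; rewrite ?hx.
Qed.

Lemma flip_coord_inj n i j x : 0 < i <= n -> 0 < j <= n ->
  flip_coord m i n x = flip_coord m j n x -> i = j.
Proof.
elim: n i j x => [|n IH] i j x hi hj; first by lia.
case: (leqP n.+1 m.+1) => hn; first by rewrite !flip_coord_base.
case: (eqVneq i n.+1) => [->|hi1]; case: (eqVneq j n.+1) => [->|hj1] //.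
- by rewrite flip_coord_top // => h; have := @flip_coord_below n j x; rewrite -h; lia.
- by rewrite flip_coord_top // => h; have := @flip_coord_below n i x; rewrite h; lia.
rewrite !flip_coord_step //; try lia.
by case: (x n.+1) => [/swapn_inj|]; apply: IH; lia.
Qed.

Lemma flip_coord_fix n i x : 0 < i <= m -> n <= m + i -> flip_coord m i n x = i.
Proof.
elim: n x => [|n IH] x hi hn //.
case: (leqP n.+1 m.+1) => hn'; first by rewrite flip_coord_base.
rewrite flip_coord_step ?IH //; try lia.
by case: (x n.+1); rewrite /swapn; repeat case: eqP => //; lia.
Qed.

End FlipCoord.

(* At every point x of H_n, the relator a b (c d)^-1 lifts to the boundary of
   the square spanned by the directions flip_coord a x and flip_coord c x. *)
Definition square_relator m n a b c d := forall x,
  [/\ flip_coord m a n x != flip_coord m c n x,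
      flip_coord m d n (flipc (flip_coord m c n x) x) = flip_coord m a n x &
      flip_coord m b n (flipc (flip_coord m a n x) x) = flip_coord m c n x].

Section SquareRelators.

Variable m : nat.

Lemma square_relator_step n a b c d : m < n ->
  0 < a <= n -> 0 < b <= n -> 0 < c <= n -> 0 < d <= n ->
  square_relator m n a b c d -> square_relator m n.+1 a b c d.
Proof.
move=> hn ha hb hc hd sq_n x.
have ne i : 0 < i <= n -> i != n.+1 by lia.
have flip_last y K : 0 < K <= n -> flipc K y n.+1 = y n.+1.
  by move=> hK; rewrite /flipc ifF //; apply/eqP; lia.
rewrite !flip_coord_step ?ne //.
case hx: (x n.+1); last first.
  have [h1 h2 h3] := sq_n x.
  by rewrite !flip_last ?hx ?h2 ?h3 //; exact: flip_coord_range.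
set y := swapc (n - m) n (flipc n.+1 x).
have [h1 h2 h3] := sq_n y.
have swap_range K : 0 < K <= n -> 0 < swapn (n - m) n K <= n.
  by apply: swapn_range; lia.
have flip_swap K : 0 < K <= n -> forall t, 0 < t <= n ->
    swapc (n - m) n (flipc n.+1 (flipc (swapn (n - m) n K) x)) t = flipc K y t.
  by move=> hK t ht; rewrite /y /swapc /flipc /swapn; repeat case: eqP => //=; lia.
rewrite !flip_last ?hx ?swap_range //; try exact: flip_coord_range.
split.
- by apply: contra h1 => /eqP /swapn_inj ->.
- by rewrite (eq_flip_coord m d (flip_swap _ (flip_coord_range m y hc))) h2.
- by rewrite (eq_flip_coord m b (flip_swap _ (flip_coord_range m y ha))) h3.
Qed.

Lemma square_relator_comm n j : 0 < j <= m -> m < n ->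
  square_relator m n j j.+1 j.+1 j.
Proof.
move=> hj; elim: n => [|n IH] hn //.
case: (leqP n.+1 m.+1) => hn'.
  by move=> x; rewrite !flip_coord_base //; split => //; lia.
apply: square_relator_step; try lia; apply: IH; lia.
Qed.

Lemma square_relator_conj n j : 0 < j <= m -> m + j < n ->
  square_relator m n j (m + j).+1 (m + j).+1 (m + j).
Proof.
move=> hj; elim: n => [|n IH] hn //.
case: (ltnP (m + j) n) => hn'.
  apply: square_relator_step; try lia; apply: IH; lia.
have -> : n = m + j by lia.
move=> x; rewrite !flip_coord_top //; split => //.
- have /(flip_coord_below m x) : 0 < j <= m + j by lia.
  lia.
- rewrite !flip_coord_step ?flip_coord_top; try lia.
  have -> : m + j - m = j by lia.
  rewrite /flipc eqxx !flip_coord_fix /swapn; try lia.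
  by case: (x _); rewrite /= ?eqxx //; case: eqP => //; lia.
Qed.

End SquareRelators.

Section CubeCells.

Variable n : nat.
Implicit Types (S T : {set 'I_n}) (v w : {ffun 'I_n -> bool}).

Definition flip_at (o : 'I_n) v : {ffun 'I_n -> bool} :=
  [ffun k => if k == o then ~~ v k else v k].

Definition cell S v : Tcell n := [ffun k => (k \in S, v k)].

Lemma flip_at_ne o v k : k != o -> flip_at o v k = v k.
Proof. by rewrite ffunE => /negbTE ->. Qed.

Lemma eq_or_flip_at o v w : (forall k, k != o -> w k = v k) -> w = v \/ w = flip_at o v.
Proof.
move=> H; case: (eqVneq (w o) (v o)) => ho; [left|right]; apply/ffunP => k;
  rewrite ?ffunE; case: (eqVneq k o) => [->|hk]; rewrite ?(H k hk) //.
by move: ho; case: (w o); case: (v o).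
Qed.

Lemma cell_surj (d : Tcell n) : exists S v, d = cell S v.
Proof.
exists [set k | (d k).1], [ffun k => (d k).2].
by apply/ffunP => k; rewrite !ffunE inE; case: (d k).
Qed.

Lemma cell_inj S S' v v' : cell S v = cell S' v' -> S = S' /\ v = v'.
Proof.
move=> e; split; [apply/setP => k | apply/ffunP => k];
  by have := congr1 (fun f : Tcell n => f k) e; rewrite !ffunE => -[].
Qed.

Lemma cdim_cell S v : cdim (cell S v) = #|S|.
Proof. by apply: eq_card => k; rewrite inE ffunE. Qed.

Lemma cfaceP T w S v :
  reflect (T \subset S /\ forall k, (k \in T) || (k \notin S) -> w k = v k)
          (cface (cell T w) (cell S v)).
Proof.
apply: (iffP forallP) => [H|[sTS H] k].
  split=> [|k].
    by apply/subsetP => k kT; move: (H k); rewrite !ffunE kT; case: (k \in S).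
  move: (H k); rewrite !ffunE xpair_eqE /=.
  by case/orP=> [/andP[_ /eqP]|/andP[-> /negbTE ->]].
rewrite !ffunE /= xpair_eqE.
case kT: (k \in T); first by rewrite (subsetP sTS k kT) H ?kT ?eqxx.
by case kS: (k \in S); rewrite //= H ?kS ?orbT ?eqxx.
Qed.

Lemma cell1_vertices o v :
  [set d | cface d (cell [set o] v) && (cdim d == 0)] =
  [set cell set0 v; cell set0 (flip_at o v)].
Proof.
apply/setP => d; have [T [w ->]] := cell_surj d.
rewrite !inE cdim_cell cards_eq0; apply/andP/orP.
- move=> [/cfaceP [_ H] /eqP T0]; subst T.
  have Ho k : k != o -> w k = v k by move=> ko; apply: H; rewrite !inE ko orbT.
  by case: (eq_or_flip_at Ho) => ->; [left|right].
- case=> /eqP /cell_inj [-> ->]; split => //; apply/cfaceP;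
  by split => [|k]; rewrite ?sub0set // !inE => ko; rewrite flip_at_ne.
Qed.

Lemma cell2_edges o o' v : o != o' ->
  [set d | cface d (cell [set o; o'] v) && (cdim d == 1)] =
  [set cell [set o] v; cell [set o'] (flip_at o v);
       cell [set o'] v; cell [set o] (flip_at o' v)].
Proof.
move=> oo'; apply/setP => d; have [T [w ->]] := cell_surj d.
rewrite !inE cdim_cell; apply/andP/idP.
- move=> [/cfaceP [sT H] /cards1P [t T1]]; subst T.
  have := subsetP sT t (set11 t); rewrite !inE => /orP [] /eqP ot; rewrite ot {ot} in H *.
  + have Ho k : k != o' -> w k = v k.
      by move=> ko; apply: H; rewrite !inE (negbTE ko) orbF; case: (k == o).
    by case: (eq_or_flip_at Ho) => ->; rewrite !eqxx ?orbT.
  + have Ho k : k != o -> w k = v k.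
      by move=> ko; apply: H; rewrite !inE (negbTE ko) /= orbN.
    by case: (eq_or_flip_at Ho) => ->; rewrite !eqxx ?orbT.
- move=> /orP [/orP [/orP [|]|]|] /eqP /cell_inj [-> ->]; split; rewrite ?cards1 //;
  apply/cfaceP; split; rewrite ?sub1set ?inE ?eqxx ?orbT // => k; rewrite !inE => hk;
  rewrite ?flip_at_ne //; apply: contraTneq hk => ->;
  by rewrite !eqxx ?orbT /= orbF // eq_sym.
Qed.

End CubeCells.

Section Covering.

Variable m : nat.
Hypothesis hm : 0 < m.
Local Notation I := 'I_(2 * m).+1.

Definition gcoord (v : Hpt m) (i : I) : I :=
  inord (flip_coord m i.+1 (2 * m).+1 (ext_pt v)).-1.

Lemma gcoordE v i : (gcoord v i).+1 = flip_coord m i.+1 (2 * m).+1 (ext_pt v).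
Proof.
by have h := @flip_coord_range m _ i.+1 (ext_pt v) (ltn_ord i); rewrite inordK; lia.
Qed.

Lemma ext_pt_flip_at (v : Hpt m) o : ext_pt (flip_at o v) =1 flipc o.+1 (ext_pt v).
Proof.
case=> [|t] //=; rewrite /flipc /=.
case: insubP => [o' _ <-|hn]; first by rewrite ffunE eqSS val_eqE.
by rewrite ifF //; apply/eqP => -[e]; move: hn; rewrite e ltn_ord.
Qed.

Lemma act_flip_at i v : act i v = flip_at (gcoord v i) v.
Proof.
apply/ffunP => o; rewrite !ffunE piH_flip_coord //; last exact: ltn_ord.
by rewrite /flipc -gcoordE eqSS /ext_pt valK val_eqE.
Qed.

Lemma gcoord_inj v : injective (gcoord v).
Proof.
move=> i j e; have : (gcoord v i).+1 = (gcoord v j).+1 by rewrite e.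
by rewrite !gcoordE => /flip_coord_inj h; apply/val_inj/succn_inj/h; apply: ltn_ord.
Qed.

Lemma gcoord_square v (a b c d : I) :
  square_relator m (2 * m).+1 a.+1 b.+1 c.+1 d.+1 ->
  [/\ gcoord v a != gcoord v c,
      gcoord (flip_at (gcoord v c) v) d = gcoord v a &
      gcoord (flip_at (gcoord v a) v) b = gcoord v c].
Proof.
move=> /(_ (ext_pt v)) [ac d_sq b_sq].
have flipE o i : (gcoord (flip_at o v) i).+1 =
    flip_coord m i.+1 (2 * m).+1 (flipc o.+1 (ext_pt v)).
  by rewrite gcoordE; apply: eq_flip_coord => t _; rewrite ext_pt_flip_at.
split.
- by apply: contra ac => /eqP e; rewrite -!gcoordE e.
- by apply/val_inj/succn_inj; rewrite flipE !gcoordE.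
- by apply/val_inj/succn_inj; rewrite flipE !gcoordE.
Qed.

Definition letter_a (r : bool * 'I_m) := (rel_letters r).1.1.1.
Definition letter_b (r : bool * 'I_m) := (rel_letters r).1.1.2.
Definition letter_c (r : bool * 'I_m) := (rel_letters r).1.2.
Definition letter_d (r : bool * 'I_m) := (rel_letters r).2.

Lemma rel_lettersE r : rel_letters r = (letter_a r, letter_b r, letter_c r, letter_d r).
Proof. by rewrite /letter_a /letter_b /letter_c /letter_d; case: (rel_letters r) => [[[]]]. Qed.

Lemma gen_val k : 0 < k <= (2 * m).+1 -> gen m k = k.-1 :> nat.
Proof. by move=> h; rewrite /gen inordK; lia. Qed.

Lemma relator_square r :
  square_relator m (2 * m).+1
    (letter_a r).+1 (letter_b r).+1 (letter_c r).+1 (letter_d r).+1.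
Proof.
case: r => [[] j]; rewrite /letter_a /letter_b /letter_c /letter_d /rel_letters /=;
  have := ltn_ord j => hj; rewrite !gen_val; try lia.
- have -> : (m + j.+1 + 1).-1.+1 = (m + j.+1).+1 by lia.
  have -> : (m + j.+1).-1.+1 = m + j.+1 by lia.
  by apply: square_relator_conj; lia.
- by apply: square_relator_comm; lia.
Qed.

Lemma letter_a_val b (j : 'I_m) : letter_a (b, j) = j :> nat.
Proof.
by rewrite /letter_a /rel_letters; case: b; rewrite /= gen_val //; have := ltn_ord j; lia.
Qed.

Lemma letter_c_val b (j : 'I_m) : letter_c (b, j) = (if b then m + j + 1 else j + 1) :> nat.
Proof.
by rewrite /letter_c /rel_letters; case: b; rewrite /= gen_val //; have := ltn_ord j; lia.
Qed.

Lemma letters_ac_inj r r' :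
  [set letter_a r; letter_c r] = [set letter_a r'; letter_c r'] -> r = r'.
Proof.
case: r r' => b j [b' j'] E.
have /[!inE] h1 : letter_a (b, j) \in [set letter_a (b', j'); letter_c (b', j')].
  by rewrite -E !inE eqxx.
have /[!inE] h2 : letter_c (b, j) \in [set letter_a (b', j'); letter_c (b', j')].
  by rewrite -E !inE eqxx orbT.
have /[!inE] h3 : letter_a (b', j') \in [set letter_a (b, j); letter_c (b, j)].
  by rewrite E !inE eqxx.
move: h1 h2 h3; rewrite -!val_eqE /= !letter_a_val !letter_c_val.
have := ltn_ord j; have := ltn_ord j'; clear E.
by case: b; case: b' => hj hj' h1 h2 h3; try (congr pair; apply: ord_inj); lia.
Qed.

Definition vertex_cell (v : Kvert m) := cell set0 v.
Definition edge_cell (e : Kedge m) := cell [set gcoord e.1 e.2] e.1.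
Definition face_cell (f : Kface m) :=
  cell [set gcoord f.1 (letter_a f.2); gcoord f.1 (letter_c f.2)] f.1.

Lemma face_square v r :
  let A := gcoord v (letter_a r) in let C := gcoord v (letter_c r) in
  [/\ A != C, gcoord (flip_at C v) (letter_d r) = A & gcoord (flip_at A v) (letter_b r) = C].
Proof. exact/gcoord_square/relator_square. Qed.

Lemma edge_cell_inj : injective edge_cell.
Proof. by move=> [v i] [v' i'] /cell_inj /= [/[swap] <- /set1_inj /gcoord_inj ->]. Qed.

Lemma face_cell_inj : injective face_cell.
Proof.
move=> [v r] [v' r'] /cell_inj /= [/[swap] <-].
have im a c : [set gcoord v a; gcoord v c] = gcoord v @: [set a; c].
  by rewrite imsetU1 imset_set1.
by rewrite !im => /(imset_inj (@gcoord_inj v)) /letters_ac_inj ->.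
Qed.

Lemma edge_cell_vertices e :
  [set d | cface d (edge_cell e) && (cdim d == 0)] =
  [set vertex_cell (edge_src e); vertex_cell (edge_tgt e)].
Proof. by rewrite /edge_tgt act_flip_at; apply: cell1_vertices. Qed.

Lemma face_cell_edges f :
  [set d | cface d (face_cell f) && (cdim d == 1)] = edge_cell @: face_boundary f.
Proof.
case: f => v r; have [ac d_sq b_sq] := face_square v r.
rewrite /face_boundary rel_lettersE /= !imsetU !imset_set1 /edge_cell /=.
by rewrite !act_flip_at d_sq b_sq cell2_edges.
Qed.

End Covering.

Theorem proposition6p2 (m : nat) (hm : 1 <= m) :
  exists (fV : Kvert m -> Tcell (2 * m).+1) (fE : Kedge m -> Tcell (2 * m).+1)
         (fF : Kface m -> Tcell (2 * m).+1),
    cellular_embedding fV fE fF.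
Proof.
exists (@vertex_cell m), (@edge_cell m), (@face_cell m); split.
- split; [by move=> v v' /cell_inj [] | exact: edge_cell_inj | exact: face_cell_inj].
- split=> [v|e|f]; rewrite cdim_cell ?cards0 ?cards1 //.
  by rewrite cards2; case: (face_square hm f.1 f.2) => ->.
- exact: edge_cell_vertices.
- exact: face_cell_edges.
Qed.
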